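(* Let $m_1,m_2,m_3,m_4>0$, $M=\sum m_i$, and for $\mathbf{r}=(r_{12},r_{13},r_{14},r_{23},r_{24},r_{34})$ let $U(\mathbf{r})=\sum_{i<j}\frac{m_im_j}{r_{ij}}$, $I(\mathbf{r})=\frac{1}{2M}\sum_{i<j}m_im_jr_{ij}^2$, $P(\mathbf{r})=r_{12}r_{34}+r_{14}r_{23}-r_{13}r_{24}$, $\mathcal{M}^+=\{\mathbf{r}\in[0,\infty)^6: I(\mathbf{r})=1,\ P(\mathbf{r})=0\}$. If $\mathbf{r}^\ast\in\mathcal{M}^+$ is a critical point of $U|_{\mathcal{M}^+}$, then the Lagrange multiplier $\lambda$ is positive: $\lambda>0$.
   Context: Critical points of $U|_{\mathcal{M}^+}$ have all $r_{ij}>0$ and are characterized by the existence of Lagrange multipliers $\lambda,\sigma\in\mathbb{R}$ with $\nabla_{\mathbf{r}}\big(U+\lambda M(I-1)+\sigma P\big)=0$, i.e. $m_1m_2(r_{12}^{-3}-\lambda)=\sigma r_{34}/r_{12}$, $m_3m_4(r_{34}^{-3}-\lambda)=\sigma r_{12}/r_{34}$, $m_1m_3(r_{13}^{-3}-\lambda)=-\sigma r_{24}/r_{13}$, $m_2m_4(r_{24}^{-3}-\lambda)=-\sigma r_{13}/r_{24}$, $m_1m_4(r_{14}^{-3}-\lambda)=\sigma r_{23}/r_{14}$, $m_2m_3(r_{23}^{-3}-\lambda)=\sigma r_{14}/r_{23}$; the $\lambda$ in the claim is the multiplier in these equations. *)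

From Stdlib Require Import Reals.
Open Scope R_scope.

Definition total_mass (m1 m2 m3 m4 : R) : R := m1 + m2 + m3 + m4.

Definition potU (m1 m2 m3 m4 r12 r13 r14 r23 r24 r34 : R) : R :=
  m1*m2/r12 + m1*m3/r13 + m1*m4/r14 + m2*m3/r23 + m2*m4/r24 + m3*m4/r34.

Definition momI (m1 m2 m3 m4 r12 r13 r14 r23 r24 r34 : R) : R :=
  / (2 * total_mass m1 m2 m3 m4) *
  (m1*m2*r12^2 + m1*m3*r13^2 + m1*m4*r14^2 + m2*m3*r23^2 + m2*m4*r24^2 + m3*m4*r34^2).

Definition ptolP (r12 r13 r14 r23 r24 r34 : R) : R :=
  r12*r34 + r14*r23 - r13*r24.

Definition in_Mplus (m1 m2 m3 m4 r12 r13 r14 r23 r24 r34 : R) : Prop :=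
  0 <= r12 /\ 0 <= r13 /\ 0 <= r14 /\ 0 <= r23 /\ 0 <= r24 /\ 0 <= r34 /\
  momI m1 m2 m3 m4 r12 r13 r14 r23 r24 r34 = 1 /\
  ptolP r12 r13 r14 r23 r24 r34 = 0.

(* Critical point of U restricted to M^+ with Lagrange multipliers lam, sig,
   as characterized in the paper: all r_ij > 0 and
   grad_r (U + lam M (I-1) + sig P) = 0, written out. *)
Definition lagrange_critical (m1 m2 m3 m4 r12 r13 r14 r23 r24 r34 lam sig : R) : Prop :=
  0 < r12 /\ 0 < r13 /\ 0 < r14 /\ 0 < r23 /\ 0 < r24 /\ 0 < r34 /\
  m1*m2*(/ r12^3 - lam) = sig * r34 / r12 /\
  m3*m4*(/ r34^3 - lam) = sig * r12 / r34 /\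
  m1*m3*(/ r13^3 - lam) = - sig * r24 / r13 /\
  m2*m4*(/ r24^3 - lam) = - sig * r13 / r24 /\
  m1*m4*(/ r14^3 - lam) = sig * r23 / r14 /\
  m2*m3*(/ r23^3 - lam) = sig * r14 / r23.

From Stdlib Require Import Reals Lra Psatz.
Open Scope R_scope.

(* Euler's relation: U is homogeneous of degree -1 while M I and P are
   homogeneous of degree 2, so pairing the Lagrange equation with r gives
   -U + 2 lam M I + 2 sig P = 0.  On M^+ this reads U = 2 M lam, and U > 0. *)

Definition inertia_sum (m1 m2 m3 m4 r12 r13 r14 r23 r24 r34 : R) : R :=
  m1*m2*r12^2 + m1*m3*r13^2 + m1*m4*r14^2 + m2*m3*r23^2 + m2*m4*r24^2 + m3*m4*r34^2.

(* No positivity hypothesis is needed: if the total mass vanished, [/ 0 = 0]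
   would force [momI = 0]. *)
Lemma momI_eq1_inertia_sum (m1 m2 m3 m4 r12 r13 r14 r23 r24 r34 : R) :
  momI m1 m2 m3 m4 r12 r13 r14 r23 r24 r34 = 1 ->
  inertia_sum m1 m2 m3 m4 r12 r13 r14 r23 r24 r34 = 2 * total_mass m1 m2 m3 m4.
Proof.
  unfold momI; fold (inertia_sum m1 m2 m3 m4 r12 r13 r14 r23 r24 r34).
  set (S := inertia_sum _ _ _ _ _ _ _ _ _ _); set (M := total_mass _ _ _ _).
  intros hI.
  destruct (Req_dec (2 * M) 0) as [hM0 | hM0].
  - rewrite hM0, Rinv_0 in hI; lra.
  - rewrite <- (Rmult_1_r (2 * M)), <- hI; field; intros hM; apply hM0; rewrite hM; ring.
Qed.

Lemma potU_pos (m1 m2 m3 m4 r12 r13 r14 r23 r24 r34 : R) :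
  0 < m1 -> 0 < m2 -> 0 < m3 -> 0 < m4 ->
  0 < r12 -> 0 < r13 -> 0 < r14 -> 0 < r23 -> 0 < r24 -> 0 < r34 ->
  0 < potU m1 m2 m3 m4 r12 r13 r14 r23 r24 r34.
Proof.
  intros; unfold potU.
  repeat apply Rplus_lt_0_compat; apply Rdiv_lt_0_compat; nra.
Qed.

Lemma lagrange_eq_mul_sq (a r lam s q : R) :
  0 < r -> a * (/ r^3 - lam) = s * q / r -> a / r - lam * (a * r^2) = s * q * r.
Proof.
  intros hr h.
  replace (a / r - lam * (a * r^2)) with (a * (/ r^3 - lam) * r^2) by (field; lra).
  rewrite h; field; lra.
Qed.

Lemma lagrange_critical_euler (m1 m2 m3 m4 r12 r13 r14 r23 r24 r34 lam sig : R) :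
  lagrange_critical m1 m2 m3 m4 r12 r13 r14 r23 r24 r34 lam sig ->
  potU m1 m2 m3 m4 r12 r13 r14 r23 r24 r34
    - lam * inertia_sum m1 m2 m3 m4 r12 r13 r14 r23 r24 r34
  = 2 * sig * ptolP r12 r13 r14 r23 r24 r34.
Proof.
  intros (p12 & p13 & p14 & p23 & p24 & p34 & e12 & e34 & e13 & e24 & e14 & e23).
  apply lagrange_eq_mul_sq in e12, e34, e13, e24, e14, e23; trivial.
  unfold potU, inertia_sum, ptolP; lra.
Qed.

Theorem lemma3 (m1 m2 m3 m4 : R)
  (hm1 : 0 < m1) (hm2 : 0 < m2) (hm3 : 0 < m3) (hm4 : 0 < m4)
  (r12 r13 r14 r23 r24 r34 lam sig : R)
  (hM : in_Mplus m1 m2 m3 m4 r12 r13 r14 r23 r24 r34)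
  (hcrit : lagrange_critical m1 m2 m3 m4 r12 r13 r14 r23 r24 r34 lam sig) :
  0 < lam.
Proof.
  destruct hM as (_ & _ & _ & _ & _ & _ & hI & hP).
  pose proof (lagrange_critical_euler _ _ _ _ _ _ _ _ _ _ _ _ hcrit) as hEuler.
  destruct hcrit as (p12 & p13 & p14 & p23 & p24 & p34 & _).
  pose proof (potU_pos m1 m2 m3 m4 r12 r13 r14 r23 r24 r34
                hm1 hm2 hm3 hm4 p12 p13 p14 p23 p24 p34) as hU.
  rewrite hP, (momI_eq1_inertia_sum _ _ _ _ _ _ _ _ _ _ hI) in hEuler.
  unfold total_mass in hEuler; nra.
Qed.
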